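(* Let $(b,w)\in\mathbb{N}^2$. Then there exists a partition $\lambda$ such that $(b(\lambda),w(\lambda))=(b,w)$ if and only if there exist integers $k,l\in\mathbb{N}=\{0,1,2,\dots\}$ such that either \[(b,w)=\big((k+1)^2+l,\;k(k+1)+l\big)\quad\text{or}\quad (b,w)=\big(k^2+l,\;k(k+1)+l\big).\]
   Context: A partition is a finite nonincreasing sequence $\lambda=(\lambda_1,\lambda_2,\dots,\lambda_r)$ of positive integers (the empty sequence is the unique partition of $0$); set $\lambda_i=0$ for $i<1$ and $i>r$. Its Ferrers graph consists of unit squares, with row $i$ (rows indexed from $i=0$) containing $\lambda_{i+1}$ squares, left-justified, columns indexed from $0$. Colour the square in row $r$ and column $c$ black if $r+c$ is even and white if $r+c$ is odd. Then $b(\lambda)$ is the number of black squares and $w(\lambda)$ the number of white squares; explicitly $b(\lambda)=\sum_{j}\lceil \lambda_{2j+1}/2\rceil+\sum_j\lfloor \lambda_{2j}/2\rfloor$ and $w(\lambda)=\sum_{j}\lfloor \lambda_{2j+1}/2\rfloor+\sum_j\lceil \lambda_{2j}/2\rceil$. *)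

From mathcomp Require Import all_boot.
Set Implicit Arguments. Unset Strict Implicit. Unset Printing Implicit Defensive.

(* A partition: finite nonincreasing sequence of positive integers.
   Row i (0-indexed) of the Ferrers graph has nth 0 la i squares. *)
Definition is_partition (la : seq nat) : bool :=
  sorted geq la && all (fun x => 0 < x) la.

Definition black (la : seq nat) : nat :=
  \sum_(r < size la) count (fun c => ~~ odd (r + c)) (iota 0 (nth 0 la r)).

Definition white (la : seq nat) : nat :=
  \sum_(r < size la) count (fun c => odd (r + c)) (iota 0 (nth 0 la r)).

(** Stacking a row of length [a] on top of a partition flips the colour of
    every square below it, so [(b, w)] becomes [(uphalf a + w, a./2 + b)].
    The staircase [(n, n-1, ..., 1)] has colour counts
    [((uphalf n)^2, n./2 * (n./2).+1)], which for [n = 2k+1] and [n = 2k] are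
    the two families of the theorem with [l = 0].  The invariant "[(b, w)] is
    such a pair plus [(l, l)], for some [n] at most the first row" survives
    stacking a row, and conversely widening the first row of a staircase by
    [2 l] adds [l] to both counts. *)

From mathcomp Require Import all_boot.
From mathcomp Require Import zify.

Lemma count_odd_iota m n :
  count odd (iota m n) = if odd m then uphalf n else n./2.
Proof.
elim: n m => [|n IHn] m /=; first by case: (odd m).
by rewrite IHn /=; case: (odd m) => /=; lia.
Qed.

Lemma count_even_iota0 n : count (fun c => ~~ odd c) (iota 0 n) = uphalf n.
Proof.
have := count_predC odd (iota 0 n).
rewrite size_iota count_odd_iota /= => count_split.
by rewrite (eq_count (a2 := predC odd)) //; lia.
Qed.

Lemma black_nil : black [::] = 0.
Proof. by rewrite /black big_ord0. Qed.

Lemma white_nil : white [::] = 0.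
Proof. by rewrite /white big_ord0. Qed.

Lemma black_cons a s : black (a :: s) = uphalf a + white s.
Proof.
rewrite /black /white big_ord_recl /= count_even_iota0; congr (_ + _).
by apply: eq_bigr => i _; apply: eq_count => c; rewrite /bump /= negbK.
Qed.

Lemma white_cons a s : white (a :: s) = a./2 + black s.
Proof.
by rewrite /black /white big_ord_recl /= count_odd_iota.
Qed.

Definition staircase_pair (n l : nat) : nat * nat :=
  ((uphalf n) ^ 2 + l, n./2 * (n./2).+1 + l).

Lemma staircase_pairP (b w : nat) :
  (exists n l, (b, w) = staircase_pair n l) <->
  (exists k l : nat,
      (b, w) = ((k + 1) ^ 2 + l, k * (k + 1) + l) \/
      (b, w) = (k ^ 2 + l, k * (k + 1) + l)).
Proof.
rewrite /staircase_pair; split=> [[n [l ->]] | [k [l [->|->]]]].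
- exists n./2, l; rewrite uphalf_half addn1.
  by case: (odd n); [left | right]; rewrite ?add1n ?add0n.
- exists k.*2.+1, l; rewrite /= uphalf_double half_double.
  by rewrite addn1.
- by exists k.*2, l; rewrite uphalf_double half_double addn1.
Qed.

Lemma staircase_pair_cons a n l : n <= a ->
  exists n' l', n' <= a /\
    (uphalf a + (staircase_pair n l).2, a./2 + (staircase_pair n l).1)
    = staircase_pair n' l'.
Proof.
rewrite /staircase_pair /= => le_na.
(* A new row of the same parity as [n] absorbs the last step of the
   staircase; one of the other parity adds a step. *)
have [par | npar] := eqVneq (odd a) (odd n).
- case: n le_na par => [|m] le_ma /= par.
  + exists 0, (uphalf a + l); split => //.
    by rewrite uphalf_half par; congr (_, _); lia.
  + exists m, (uphalf a + uphalf m + l); split; first exact: ltnW.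
    rewrite !uphalf_half; move: par (odd_double_half m).
    case: (odd a) (odd m) => -[] //= _ _; congr (_, _); nia.
- have lt_na : n < a by rewrite ltn_neqAle le_na andbT; apply: contra npar => /eqP ->.
  exists n.+1, (a./2 - uphalf n + l); split => //=.
  have le_half : uphalf n <= a./2 by rewrite uphalfE half_leq.
  move: npar le_half; rewrite !uphalf_half.
  case: (odd a) (odd n) => -[] //= _ le_half; congr (_, _); nia.
Qed.

Lemma sorted_black_white s :
  sorted geq s ->
  exists n l, n <= head 0 s /\ (black s, white s) = staircase_pair n l.
Proof.
elim: s => [|a s IHs] sorted_as; first by exists 0, 0; rewrite black_nil white_nil.
have [n [l [le_n_hd E]]] := IHs (path_sorted sorted_as).
have le_hd_a : head 0 s <= a by case: s sorted_as {IHs E le_n_hd} => //= b s /andP[].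
rewrite black_cons white_cons.
have [-> ->] : black s = (staircase_pair n l).1 /\ white s = (staircase_pair n l).2.
  by rewrite -E.
apply: staircase_pair_cons.
exact: leq_trans le_hd_a.
Qed.

Fixpoint staircase (n : nat) : seq nat :=
  if n is m.+1 then n :: staircase m else [::].

Lemma path_staircase m n : n <= m -> path geq m (staircase n).
Proof. by elim: n m => [|n IHn] m //= le_nm; rewrite le_nm IHn. Qed.

Lemma all_staircase_gt0 n : all (fun x => 0 < x) (staircase n).
Proof. by elim: n => //= n ->. Qed.

Lemma black_white_staircase n :
  (black (staircase n), white (staircase n)) = staircase_pair n 0.
Proof.
rewrite /staircase_pair; elim: n => [|n]; first by rewrite black_nil white_nil.
rewrite /= black_cons white_cons !addn0 => -[-> ->].
rewrite -[uphalf n.+1]/(n./2).+1 -[n.+1./2]/(uphalf n).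
by move: (n./2) (uphalf n) => h u; congr (_, _); nia.
Qed.

Lemma black_white_widen a l s :
  (black (a + l.*2 :: s), white (a + l.*2 :: s)) =
  (black (a :: s) + l, white (a :: s) + l).
Proof. by rewrite !black_cons !white_cons; congr (_, _); lia. Qed.

Lemma staircase_pair_realizable n l :
  exists la, is_partition la /\ (black la, white la) = staircase_pair n l.
Proof.
case: n => [|m].
- case: l => [|k]; first by exists [::]; rewrite black_nil white_nil.
  exists [:: k.+1.*2]; split=> //.
  rewrite black_cons white_cons black_nil white_nil /staircase_pair.
  by rewrite uphalf_double doubleK !addn0.
- exists (m.+1 + l.*2 :: staircase m); split.
  + rewrite /is_partition /= all_staircase_gt0 path_staircase ?addSn //.
    exact: leq_trans (leqnSn m) (leq_addr _ _).
  + rewrite black_white_widen.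
    by move: (black_white_staircase m.+1); rewrite /staircase_pair !addn0 => -[-> ->].
Qed.

Theorem theoremB (b w : nat) :
  (exists la : seq nat, is_partition la /\ black la = b /\ white la = w) <->
  (exists k l : nat,
      (b, w) = ((k + 1) ^ 2 + l, k * (k + 1) + l) \/
      (b, w) = (k ^ 2 + l, k * (k + 1) + l)).
Proof.
rewrite -staircase_pairP; split.
- move=> [la [/andP[sorted_la _] [<- <-]]].
  by have [n [l [_ E]]] := sorted_black_white la sorted_la; exists n, l.
- move=> [n [l E]]; have [la [part_la E']] := staircase_pair_realizable n l.
  by exists la; move: E'; rewrite -E => -[].
Qed.
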